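(* Let $K=\mathbb{Q}(\rho)$ be a simplest cubic field, where $\rho$ is a root of $x^3-ax^2-(a+3)x-1$ with $a\in\mathbb{Z}_{\geq-1}$, and let $\Delta=a^2+3a+9$. (1) If $p>3$ is a prime with $p^2\mid\Delta$, then there are integers $1\leq k,l\leq p-1$ with $\frac{k+l\rho+\rho^2}{p}\in\mathcal{O}_K$ and $2k-l\equiv -2\pmod p$. (2) In particular, if $p>3$ is prime and $K$ has integral basis $\{1,\rho,\frac{k+l\rho+\rho^2}{p}\}$ with $1\leq k,l\leq p-1$, then $2k-l\equiv-2\pmod p$. *)

From HB Require Import structures.
From mathcomp Require Import all_boot all_order all_algebra all_field.
Set Implicit Arguments. Unset Strict Implicit. Unset Printing Implicit Defensive.
Import Order.TTheory GRing.Theory Num.Theory.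
Local Open Scope ring_scope.

Definition simplest_cubic (a : int) : {poly algC} :=
  'X^3 - (a%:~R) *: 'X^2 - ((a + 3)%:~R) *: 'X - 1.

Definition Delta (a : int) : int := a ^+ 2 + 3 * a + 9.

(* x lies in the field K = Q(rho) (rho is a root of an irreducible cubic,
   so Q(rho) = Q + Q rho + Q rho^2). *)
Definition in_Qrho (rho x : algC) : Prop :=
  exists c0 c1 c2 : rat, x = ratr c0 + ratr c1 * rho + ratr c2 * rho ^+ 2.

Definition in_OK (rho x : algC) : Prop := in_Qrho rho x /\ x \in Aint.

Definition integral_basis (rho b0 b1 b2 : algC) : Prop :=
  [/\ in_OK rho b0, in_OK rho b1, in_OK rho b2 &
   forall x, in_OK rho x ->
     exists m : int * int * int,
       x = m.1.1%:~R * b0 + m.1.2%:~R * b1 + m.2%:~R * b2 /\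
       forall m' : int * int * int,
         x = m'.1.1%:~R * b0 + m'.1.2%:~R * b1 + m'.2%:~R * b2 -> m' = m].

From HB Require Import structures.
From mathcomp Require Import all_boot all_order all_algebra all_field.
From mathcomp Require Import ring zify.
Import Order.TTheory GRing.Theory Num.Theory.
Local Open Scope ring_scope.

(* Write f for the simplest cubic and w = (k + l rho + rho^2) / p.
   (1) As p is prime to 3, pick r with 3 r = a (mod p).  Then 27 f(r) and
   3 f'(r) are (3r - a)^2-multiples plus multiples of Delta, so p^2 divides
   f(r) and f'(r): s = rho - r is a root of s^3 + c2 s^2 + c1 s + c0 with
   p | c2 and p^2 | c1, c0, which forces s^2 / p to be an algebraic integer.
   Reducing r^2 and -2r mod p gives k and l, and 2k - l + 2 = 2 (r^2 + r + 1)
   = 0 (mod p) because 9 (r^2 + r + 1) = Delta (mod p).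
   (2) Expanding rho w and w^2 in the basis {1, rho, w} yields, for u = l + a,
   u k = 1, u l = k + a + 3 and u^2 + a + 3 + 2k = 0 (mod p).  These force
   p | (u^2 + u + 1)^2, hence p | u^2 + u + 1, and subtracting this from the
   third congruence leaves 2k - l + 2 = 0 (mod p). *)

Lemma eq_of_sub_mul0 (R : pzRingType) (F c x y : R) : F = 0 -> x - y = F * c -> x = y.
Proof. by move=> ->; rewrite mul0r => /subr0_eq. Qed.

Lemma PoszX (n k : nat) : (n ^ k)%:Z = n%:Z ^+ k.
Proof. by rewrite -natz natrX natz. Qed.

Lemma prime_dvdzM (p : nat) (x y : int) : prime p ->
  (p%:Z %| x * y)%Z = (p%:Z %| x)%Z || (p%:Z %| y)%Z.
Proof. by move=> p_pr; rewrite !dvdzE abszM Euclid_dvdM. Qed.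

Lemma dvdz_subr_modz (d m : int) : (d %| m - (m %% d)%Z)%Z.
Proof. by rewrite {1}(divz_eq m d) addrK dvdz_mull. Qed.

Lemma modz_range (p : nat) (x : int) : (0 < p)%N -> ~~ (p%:Z %| x)%Z ->
  (1 <= (x %% p%:Z)%Z <= p%:Z - 1).
Proof.
move=> p_gt0 p_ndvd_x; have pz : p%:Z != 0 by rewrite -lt0n.
have := modz_ge0 x pz; have := ltz_mod x pz.
have : (x %% p%:Z)%Z != 0 by apply: contra p_ndvd_x => /eqP/dvdz_mod0P.
lia.
Qed.

Lemma exists_third_modz (a : int) {p : nat} : coprime p 3 ->
  exists r : int, (p%:Z %| 3 * r - a)%Z.
Proof.
move=> cop; have [u [v uv]] := Bezoutz 3 p.
have cop3p : coprimez 3 p by rewrite coprimezE coprime_sym.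
have {}uv : u * 3 + v * p%:Z = 1 by rewrite uv; apply/eqP.
exists (u * a); apply/dvdzP; exists (- v * a).
have -> : 3 * (u * a) - a = (u * 3 - 1) * a by ring.
have -> : u * 3 - 1 = - v * p by lia.
ring.
Qed.

Section ThirdOfAModp.
Context {a r : int} {p : nat}.
Hypotheses (p_coprime3 : coprime p 3) (p2_dvd_Delta : ((p ^ 2)%:Z %| Delta a)%Z)
  (p_dvd_3rBa : (p%:Z %| 3 * r - a)%Z).

Let p2_dvd_sqr : ((p ^ 2)%:Z %| (3 * r - a) ^+ 2)%Z.
Proof. by rewrite PoszX dvdz_exp2r. Qed.

Let dvdz_cancel3 (n : nat) (x : int) : ((p ^ 2)%:Z %| 3 ^+ n * x)%Z -> ((p ^ 2)%:Z %| x)%Z.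
Proof. by rewrite Gauss_dvdzr // coprimezXr // coprimezE /= coprimeXl. Qed.

Lemma dvdz_cubic_third : ((p ^ 2)%:Z %| r ^+ 3 - a * r ^+ 2 - (a + 3) * r - 1)%Z.
Proof.
apply: (dvdz_cancel3 3).
have -> : 3 ^+ 3 * (r ^+ 3 - a * r ^+ 2 - (a + 3) * r - 1) =
  (3 * r - a) ^+ 2 * (3 * r - a) - (2 * a + 3 + 3 * (3 * r - a)) * Delta a.
  by rewrite /Delta; ring.
by apply: rpredB; [exact: dvdz_mulr | exact: dvdz_mull].
Qed.

Lemma dvdz_cubic_deriv_third : ((p ^ 2)%:Z %| 3 * r ^+ 2 - 2 * a * r - (a + 3))%Z.
Proof.
apply: (dvdz_cancel3 1).
have -> : 3 ^+ 1 * (3 * r ^+ 2 - 2 * a * r - (a + 3)) = (3 * r - a) ^+ 2 - Delta a.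
  by rewrite /Delta; ring.
exact: rpredB.
Qed.

Lemma dvdz_cyclotomic_third : (p%:Z %| r ^+ 2 + r + 1)%Z.
Proof.
have p_dvd_Delta : (p%:Z %| Delta a)%Z.
  by apply: dvdz_trans p2_dvd_Delta; rewrite dvdzE /= dvdn_exp.
rewrite -(@Gauss_dvdzr _ (3 ^+ 2)); last by rewrite coprimezXr // coprimezE.
have -> : 3 ^+ 2 * (r ^+ 2 + r + 1) = Delta a + (3 * r + a + 3) * (3 * r - a).
  by rewrite /Delta; ring.
by apply: rpredD; [|exact: dvdz_mull].
Qed.

End ThirdOfAModp.

Lemma monic_cubic_Aint (x : algC) (b2 b1 b0 : int) :
  x ^+ 3 + b2%:~R * x ^+ 2 + b1%:~R * x + b0%:~R = 0 -> x \in Aint.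
Proof.
move=> x_root; pose P : {poly algC} := Poly [:: b0%:~R; b1%:~R; b2%:~R; 1].
have PE : polyseq P = [:: b0%:~R; b1%:~R; b2%:~R; 1] by rewrite (@PolyK _ 0) //= oner_eq0.
apply: (@root_monic_Aint P).
- by rewrite /root /horner PE /=; apply/eqP; rewrite -[RHS]x_root; ring.
- by rewrite monicE /lead_coef PE.
- apply/polyOverP => i; rewrite -/(nth 0 (polyseq P) i) PE.
  by case: i => [|[|[|[|i]]]] /=; rewrite ?intr_int ?rpred1 ?nth_nil ?rpred0.
Qed.

Lemma sqr_div_Aint (x : algC) (p : nat) (b2 b1 b0 : int) : (0 < p)%N ->
  x ^+ 3 + (p%:Z * b2)%:~R * x ^+ 2 + (p%:Z ^+ 2 * b1)%:~R * x + (p%:Z ^+ 2 * b0)%:~R = 0 ->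
  x ^+ 2 / p%:R \in Aint.
Proof.
move=> p_gt0 x_root; have pn0 : p%:R != 0 :> algC by rewrite pnatr_eq0 -lt0n.
(* Squaring x (x^2 + p^2 b1) = - p (b2 x^2 + p b0) gives, for t = x^2 / p,
   t (t + p b1)^2 = p (b2 t + b0)^2. *)
apply: (@monic_cubic_Aint _ (2 * p%:Z * b1 - p%:Z * b2 ^+ 2)
  (p%:Z ^+ 2 * b1 ^+ 2 - 2 * p%:Z * b2 * b0) (- (p%:Z * b0 ^+ 2))).
pose c := x ^+ 3 + (p%:Z ^+ 2 * b1)%:~R * x - (p%:Z * b2)%:~R * x ^+ 2 - (p%:Z ^+ 2 * b0)%:~R.
apply: (@eq_of_sub_mul0 _ _ (c / p%:R ^+ 3) _ _ x_root).
by rewrite /c; field.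
Qed.

Lemma simplest_cubicE (a : int) (x : algC) :
  root (simplest_cubic a) x -> x ^+ 3 - a%:~R * x ^+ 2 - (a + 3)%:~R * x - 1 = 0.
Proof. by rewrite /root /simplest_cubic !hornerE => /eqP. Qed.

Lemma simplest_cubic_root_Aint {a : int} {rho : algC} :
  root (simplest_cubic a) rho -> rho \in Aint.
Proof.
move/simplest_cubicE => rho_root.
by apply: (@monic_cubic_Aint rho (- a) (- (a + 3)) (-1)); rewrite -[RHS]rho_root; ring.
Qed.

Lemma in_Qrho_int_div (rho : algC) (A B C : int) (d : nat) :
  in_Qrho rho ((A%:~R + B%:~R * rho + C%:~R * rho ^+ 2) / d%:R).
Proof.
exists (A%:~R / d%:R), (B%:~R / d%:R), (C%:~R / d%:R).
by rewrite !fmorph_div /= !ratr_int ratr_nat !mulrDl mulrAC [_ / _ * rho ^+ 2]mulrAC.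
Qed.

Lemma sqr_sub_third_div_Aint {a r : int} {p : nat} {rho : algC} :
  root (simplest_cubic a) rho -> coprime p 3 -> ((p ^ 2)%:Z %| Delta a)%Z ->
  (p%:Z %| 3 * r - a)%Z -> (rho - r%:~R) ^+ 2 / p%:R \in Aint.
Proof.
move=> /simplest_cubicE rho_root cop3 p2_dvd_Delta p_dvd.
have [b2 eb2] := dvdzP p_dvd.
have [b1 eb1] := dvdzP (dvdz_cubic_deriv_third cop3 p2_dvd_Delta p_dvd).
have [b0 eb0] := dvdzP (dvdz_cubic_third cop3 p2_dvd_Delta p_dvd).
apply: (@sqr_div_Aint _ _ b2 b1 b0); first by move: cop3; case: (p).
rewrite -[RHS]rho_root !(mulrC p%:Z) !(mulrC (p%:Z ^+ 2)) -PoszX -eb2 -eb1 -eb0.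
by rewrite /Delta; ring.
Qed.

Lemma OK_witness_of_sqr_dvd_Delta {a : int} {rho : algC} {p : nat} :
  root (simplest_cubic a) rho -> prime p -> (3 < p)%N -> ((p ^ 2)%:Z %| Delta a)%Z ->
  exists k l : int,
    [/\ (1 <= k <= p%:Z - 1)%R, (1 <= l <= p%:Z - 1)%R,
        in_OK rho ((k%:~R + l%:~R * rho + rho ^+ 2) / p%:R) &
        (2 * k - l = - 2 %[mod p%:Z])%Z].
Proof.
move=> rho_root p_prime p_gt3 p2_dvd_Delta.
have p_gt0 := prime_gt0 p_prime.
have pn0 : p%:R != 0 :> algC by rewrite pnatr_eq0 -lt0n.
have cop3 : coprime p 3 by rewrite prime_coprime //; apply/negP => /dvdn_leq; lia.
have [r p_dvd] := exists_third_modz a cop3.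
have p_dvd_cyc := dvdz_cyclotomic_third cop3 p2_dvd_Delta p_dvd.
have p_ndvd_r : ~~ (p%:Z %| r)%Z.
  apply: contraL p_dvd_cyc => p_dvd_r.
  have -> : r ^+ 2 + r + 1 = (r + 1) * r + 1 by ring.
  rewrite rpredDl; last exact: dvdz_mull.
  by rewrite dvdz1 /=; lia.
pose k := (r ^+ 2 %% p%:Z)%Z; pose l := ((- 2 * r) %% p%:Z)%Z.
exists k, l; split.
- by apply: modz_range; rewrite // expr2 prime_dvdzM // orbb.
- apply: modz_range; rewrite // prime_dvdzM // negb_or p_ndvd_r andbT dvdzE /=.
  by apply/negP => /dvdn_leq; lia.
- split; first by have := in_Qrho_int_div rho k l 1 p; rewrite mul1r.
  have kE : k = r ^+ 2 - (r ^+ 2 %/ p%:Z)%Z * p%:Z.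
    by rewrite /k {2}(divz_eq (r ^+ 2) p%:Z); ring.
  have lE : l = - 2 * r - ((- 2 * r) %/ p%:Z)%Z * p%:Z.
    by rewrite /l {2}(divz_eq (- 2 * r) p%:Z); ring.
  have -> : (k%:~R + l%:~R * rho + rho ^+ 2) / p%:R =
      (rho - r%:~R) ^+ 2 / p%:R - ((r ^+ 2 %/ p%:Z)%Z)%:~R - (((- 2 * r) %/ p%:Z)%Z)%:~R * rho.
    by rewrite kE lE; field.
  have theta_Aint := sqr_sub_third_div_Aint rho_root cop3 p2_dvd_Delta p_dvd.
  have rho_Aint := simplest_cubic_root_Aint rho_root.
  by apply: rpredB; [apply: rpredB | apply: rpredM]; rewrite ?Aint_int.
- apply/eqP; rewrite eqz_mod_dvd.
  have -> : 2 * k - l - -2 = 2 * (r ^+ 2 + r + 1) - 2 * (r ^+ 2 - k) + (- 2 * r - l) by ring.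
  apply: rpredD; last exact: dvdz_subr_modz.
  by apply: rpredB; apply: dvdz_mull => //; exact: dvdz_subr_modz.
Qed.

Section IntegralBasis.
Context {rho : algC} {p : nat} {k l : int}.
Hypothesis p_gt0 : (0 < p)%N.
Let w := (k%:~R + l%:~R * rho + rho ^+ 2) / p%:R.
Hypothesis basis : integral_basis rho 1 rho w.

Let pn0 : p%:R != 0 :> algC.
Proof. by rewrite pnatr_eq0 -lt0n. Qed.

Lemma integral_basis_free (c0 c1 c2 : int) :
  c0%:~R + c1%:~R * rho + c2%:~R * rho ^+ 2 = 0 -> [/\ c0 = 0, c1 = 0 & c2 = 0].
Proof.
move=> c_eq0; have [_ _ _ /(_ 0) []] := basis.
  by split; [exists 0, 0, 0; rewrite !rmorph0 !mul0r !addr0 | exact: Aint0].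
move=> m [_ m_uniq].
have m0E : (0, 0, 0) = m by apply: m_uniq; rewrite /= !mul0r !addr0.
have [] : (c0 - c2 * k, c1 - c2 * l, c2 * p%:Z) = (0, 0, 0).
  by rewrite m0E; apply: m_uniq; rewrite /= -c_eq0 /w; field.
have pz : p%:Z != 0 by rewrite -lt0n.
move=> /subr0_eq c0E /subr0_eq c1E /eqP.
by rewrite mulf_eq0 (negbTE pz) orbF => /eqP c2_0; rewrite c0E c1E c2_0 !mul0r.
Qed.

Lemma integral_basis_coords {A B C : int} {e : nat} : (0 < e)%N ->
  (A%:~R + B%:~R * rho + C%:~R * rho ^+ 2) / (p * e)%:R \in Aint ->
  exists m0 m1 m2 : int,
    [/\ A = e%:Z * (p%:Z * m0 + m2 * k), B = e%:Z * (p%:Z * m1 + m2 * l) & C = e%:Z * m2].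
Proof.
move=> e_gt0 x_Aint; have en0 : e%:R != 0 :> algC by rewrite pnatr_eq0 -lt0n.
have [_ _ _ /(_ _ (conj (in_Qrho_int_div rho A B C (p * e)) x_Aint))] := basis.
set x := (_ / _) in x_Aint *.
move=> [[[m0 m1] m2] [/= x_eq _]]; exists m0, m1, m2.
have [] := integral_basis_free (A - e%:Z * (p%:Z * m0 + m2 * k))
  (B - e%:Z * (p%:Z * m1 + m2 * l)) (C - e%:Z * m2).
  apply: (@eq_of_sub_mul0 _ (x - (m0%:~R * 1 + m1%:~R * rho + m2%:~R * w)) (p%:R * e%:R)).
    by rewrite x_eq subrr.
  by rewrite /x /w natrM; field; rewrite pn0.
by move=> /subr0_eq -> /subr0_eq -> /subr0_eq ->.
Qed.
End IntegralBasis.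

Lemma congr_of_basis_relations (a k l : int) (p : nat) : prime p ->
  (p%:Z %| 1 - (l + a) * k)%Z -> (p%:Z %| k + a + 3 - (l + a) * l)%Z ->
  (p%:Z %| (l + a) ^+ 2 + a + 3 + 2 * k)%Z -> (2 * k - l = - 2 %[mod p%:Z])%Z.
Proof.
move=> p_prime dvd_X dvd_Y dvd_Z; set u := l + a in dvd_X dvd_Y dvd_Z.
have p_dvd_cyc : (p%:Z %| u ^+ 2 + u + 1)%Z.
  suff : (p%:Z %| (u ^+ 2 + u + 1) * (u ^+ 2 + u + 1))%Z by rewrite prime_dvdzM // orbb.
  have -> : (u ^+ 2 + u + 1) * (u ^+ 2 + u + 1) =
      (2 * u + 1) * (1 - u * k) + (2 * u + 1) * u * (k + a + 3 - u * l)
      + u * (u + 1) * ((u ^+ 2 + a + 3 + 2 * k) - 2 * (k + a + 3 - u * l)).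
    by rewrite /u; ring.
  apply: rpredD; first apply: rpredD; apply: dvdz_mull => //.
  exact: rpredB (dvdz_mull _ dvd_Y).
apply/eqP; rewrite eqz_mod_dvd.
have -> : 2 * k - l - -2 = (u ^+ 2 + a + 3 + 2 * k) - (u ^+ 2 + u + 1) by rewrite /u; ring.
exact: rpredB.
Qed.

Lemma congr_of_integral_basis {a : int} {rho : algC} {p : nat} {k l : int} :
  root (simplest_cubic a) rho -> prime p ->
  integral_basis rho 1 rho ((k%:~R + l%:~R * rho + rho ^+ 2) / p%:R) ->
  (2 * k - l = - 2 %[mod p%:Z])%Z.
Proof.
move=> /simplest_cubicE rho_root p_prime basis.
have p_gt0 := prime_gt0 p_prime.
have pn0 : p%:R != 0 :> algC by rewrite pnatr_eq0 -lt0n.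
set w := (_ / _) in basis.
have [_ [_ rho_Aint] [_ w_Aint] _] := basis.
have rho_w : rho * w =
    (1%:~R + (k + a + 3)%:~R * rho + (l + a)%:~R * rho ^+ 2) / (p * 1)%:R.
  by apply: (@eq_of_sub_mul0 _ _ (p%:R^-1) _ _ rho_root); rewrite /w muln1; field.
have w_w : w * w = ((a + 2 * l + k ^+ 2)%:~R
      + (a ^+ 2 + 3 * a + 1 + 2 * l * (a + 3) + 2 * k * l)%:~R * rho
      + ((l + a) ^+ 2 + a + 3 + 2 * k)%:~R * rho ^+ 2) / (p * p)%:R.
  apply: (@eq_of_sub_mul0 _ _ ((rho + a%:~R + 2 * l%:~R) / p%:R ^+ 2) _ _ rho_root).
  by rewrite /w natrM; field.
have rho_w_Aint : rho * w \in Aint by rewrite rpredM.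
have w_w_Aint : w * w \in Aint by rewrite rpredM.
rewrite rho_w in rho_w_Aint; rewrite w_w in w_w_Aint.
have [m0 [m1 [m2 [eX eY eZ]]]] := integral_basis_coords p_gt0 basis (ltn0Sn 0) rho_w_Aint.
have [_ [_ [n2 [_ _ eZ2]]]] := integral_basis_coords p_gt0 basis p_gt0 w_w_Aint.
apply: (congr_of_basis_relations a) => //; apply/dvdzP.
- by exists m0; rewrite eZ; lia.
- by exists m1; rewrite eZ; lia.
- by exists n2; rewrite eZ2; lia.
Qed.

Theorem corollary4p3 (a : int) (rho : algC) :
  (-1 <= a)%R -> root (simplest_cubic a) rho ->
  (* (1) *)
  (forall p : nat, prime p -> (3 < p)%N -> ((p ^ 2)%:Z %| Delta a)%Z ->
     exists k l : int,
       [/\ (1 <= k <= p%:Z - 1)%R, (1 <= l <= p%:Z - 1)%R,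
           in_OK rho ((k%:~R + l%:~R * rho + rho ^+ 2) / p%:R) &
           (2 * k - l = - 2 %[mod p%:Z])%Z]) /\
  (* (2) *)
  (forall (p : nat) (k l : int), prime p -> (3 < p)%N ->
     (1 <= k <= p%:Z - 1)%R -> (1 <= l <= p%:Z - 1)%R ->
     integral_basis rho 1 rho ((k%:~R + l%:~R * rho + rho ^+ 2) / p%:R) ->
     (2 * k - l = - 2 %[mod p%:Z])%Z).
Proof.
move=> _ rho_root; split=> [p | p k l p_prime _ _ _].
  exact: OK_witness_of_sqr_dvd_Delta rho_root.
exact: congr_of_integral_basis rho_root p_prime.
Qed.
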